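(* Let $c$ be the ellipse $x^2/a_c^2+y^2/b_c^2=1$ with $a_c>b_c>0$, linear eccentricity $d=\sqrt{a_c^2-b_c^2}$ and numerical eccentricity $m=d/a_c$, and let $\mathrm{sn},\mathrm{cn},\mathrm{dn}$ denote the Jacobian elliptic functions with modulus $m$ and $K$ the complete elliptic integral of the first kind with modulus $m$. \begin{enumerate} \item For every ellipse $e$ with semiaxes $(a_e,b_e)$ confocal with $c$ and exterior to it, the billiards in $e$ with caustic $c$ are canonically parametrized by $\tilde u\mapsto(-a_e\,\mathrm{sn}\,\tilde u,\ b_e\,\mathrm{cn}\,\tilde u)$ in the following sense: if $\Delta\tilde u$ satisfies $b_c=b_e\,\mathrm{cn}(\Delta\tilde u)$, then for any initial value $\tilde u_0$ the vertices of the billiard in $e$ with caustic $c$ starting at the point with parameter $\tilde u_0$ have the parameters $\tilde u_0+2k\Delta\tilde u$, $k\in\mathbb Z$. \item Conversely, let $N\ge 3$ and $\tau\ge1$ be integers with $\gcd(N,\tau)=1$ and $2\tau<N$, and put $\Delta\tilde u=\frac{2\tau K}{N}$. If \[a_e=\frac{a_c\,\mathrm{dn}(\Delta\tilde u)}{\mathrm{cn}(\Delta\tilde u)},\qquad b_e=\frac{b_c}{\mathrm{cn}(\Delta\tilde u)},\] then the ellipse $e$ with semiaxes $(a_e,b_e)$ is confocal with $c$ and the billiards in $e$ with caustic $c$ are $N$-periodic with turning number $\tau$. \end{enumerate}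
   Context: Confocal conics of $c$: $\frac{x^2}{a_c^2+k}+\frac{y^2}{b_c^2+k}=1$. An ellipse $e$ confocal with $c$ and exterior to it has semiaxes $a_e^2=a_c^2+k_e$, $b_e^2=b_c^2+k_e$ with $k_e>0$. A billiard in $e$ with caustic $c$ is a sequence of points $P_1,P_2,\dots$ on $e$ such that each line $P_iP_{i+1}$ is tangent to $c$ and $P_{i-1}P_i$, $P_iP_{i+1}$ are the two tangents from $P_i$ to $c$; it is traversed counterclockwise. It is $N$-periodic if $P_{i+N}=P_i$ for all $i$; its turning number $\tau$ is the number of times one period of the billiard winds around the center of $e$. The modulus convention: $\tilde u=\int_0^{\varphi}\frac{d\psi}{\sqrt{1-m^2\sin^2\psi}}$, $\mathrm{sn}\,\tilde u=\sin\varphi$, $\mathrm{cn}\,\tilde u=\cos\varphi$, $\mathrm{dn}\,\tilde u=\sqrt{1-m^2\mathrm{sn}^2\tilde u}$, $K=\int_0^{\pi/2}\frac{d\psi}{\sqrt{1-m^2\sin^2\psi}}$. *)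

From Stdlib Require Import Reals Lra ZArith ClassicalEpsilon.
From Coquelicot Require Import Coquelicot.
Open Scope R_scope.

Definition ellF (m phi : R) : R :=
  RInt (fun psi => / sqrt (1 - m ^ 2 * (sin psi) ^ 2)) 0 phi.

(** amplitude: the inverse function of ellF (well defined for 0 <= m < 1,
    where ellF m is a strictly increasing bijection R -> R). *)
Definition am (m u : R) : R :=
  epsilon (inhabits 0) (fun phi => ellF m phi = u).

Definition sn (m u : R) : R := sin (am m u).
Definition cn (m u : R) : R := cos (am m u).
Definition dn (m u : R) : R := sqrt (1 - m ^ 2 * (sn m u) ^ 2).
Definition ellK (m : R) : R := ellF m (PI / 2).

Definition point := (R * R)%type.

Definition on_ellipse (a b : R) (P : point) : Prop :=
  (fst P) ^ 2 / a ^ 2 + (snd P) ^ 2 / b ^ 2 = 1.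

Definition on_line (P Q X : point) : Prop :=
  exists t : R, X = (fst P + t * (fst Q - fst P), snd P + t * (snd Q - snd P)).

Definition tangent_line (a b : R) (P Q : point) : Prop :=
  P <> Q /\ exists! X : point, on_ellipse a b X /\ on_line P Q X.

Definition det2 (P Q : point) : R := fst P * snd Q - snd P * fst Q.

(** Billiard in the ellipse e = (ae,be) with caustic c = (ac,bc), indexed by Z:
    all P i lie on e, each line P i P (i+1) is tangent to c, the lines
    P (i-1) P i and P i P (i+1) are the two (distinct) tangents from P i to c,
    and it is traversed counterclockwise (each step turns positively about the
    common center). *)
Definition billiard (ae be ac bc : R) (P : Z -> point) : Prop :=
  (forall i : Z, on_ellipse ae be (P i)) /\
  (forall i : Z, tangent_line ac bc (P i) (P (i + 1)%Z)) /\
  (forall i : Z, ~ on_line (P (i - 1)%Z) (P i) (P (i + 1)%Z)) /\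
  (forall i : Z, 0 < det2 (P i) (P (i + 1)%Z)).

Definition periodic (N : nat) (P : Z -> point) : Prop :=
  forall i : Z, P (i + Z.of_nat N)%Z = P i.

Definition vnorm (P : point) : R := sqrt (fst P ^ 2 + snd P ^ 2).

(** unoriented angle between the position vectors of P and Q, in [0, pi];
    for a counterclockwise step it is the increment of the polar angle *)
Definition angle (P Q : point) : R :=
  acos ((fst P * fst Q + snd P * snd Q) / (vnorm P * vnorm Q)).

Fixpoint swept (P : Z -> point) (n : nat) : R :=
  match n with
  | O => 0
  | S k => swept P k + angle (P (Z.of_nat k)) (P (Z.of_nat k + 1)%Z)
  end.

Definition turning_number (N tau : nat) (P : Z -> point) : Prop :=
  swept P N = 2 * PI * INR tau.

Definition param (m ae be u : R) : point := (- ae * sn m u, be * cn m u).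

(* The amplitude [am m] is the inverse of the strictly increasing map [ellF m], so [sn], [cn],
   [dn] are differentiable, and the addition theorems follow by showing that their right-hand
   sides have zero derivative along [u + v = const].  By the addition theorems, the chord of [e]
   from the parameter [u - du] to [u + du] has direction and moment that are explicit in [u] and
   [du], and [bc = be cn du] (together with confocality, i.e. [ac dn du = ae cn du]) makes it
   satisfy the tangency equation [bc^2 wx^2 + ac^2 wy^2 = det2 A w ^ 2] of [c] for every [u].
   The tangency equation is a nondegenerate binary quadratic form in the direction [w], so
   from a point of [e] there are only two tangents to [c]; hence a counterclockwise billiard is
   determined by its first vertex, which gives part 1.  For part 2, [N du = 2 tau K] and
   [am (u + 4 tau K) = am u + 2 tau PI] make the vertices [N]-periodic, and summing the
   increments of a continuous lift of the polar angle gives the total angle [2 tau PI]. *)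

From Stdlib Require Import Reals ZArith Lra Lia Psatz Nsatz ClassicalEpsilon Ranalysis5
  FunctionalExtensionality.
From Coquelicot Require Import Coquelicot.
Open Scope R_scope.

(** * Amplitude and Jacobi elliptic functions *)

Lemma is_derive_0_const (f : R -> R) (a b : R) :
  (forall x, is_derive f x 0) -> f a = f b.
Proof.
  intros Hf.
  destruct (MVT_cor4 f (fun _ => 0) b (Rabs (a - b)) (fun c _ => Hf c) a (Rle_refl _))
    as [c [Hc _]].
  lra.
Qed.

Definition ell_delta (m phi : R) : R := sqrt (1 - m ^ 2 * sin phi ^ 2).

Section Amplitude.
Variable m : R.
Hypothesis m_range : 0 <= m < 1.

Lemma ell_radicand_pos phi : 0 < 1 - m ^ 2 * sin phi ^ 2.
Proof. pose proof (SIN_bound phi). assert (0 <= sin phi ^ 2 <= 1) by nra. nra. Qed.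

Lemma ell_delta_pos phi : 0 < ell_delta m phi.
Proof. apply sqrt_lt_R0, ell_radicand_pos. Qed.

Lemma ell_delta_le_1 phi : ell_delta m phi <= 1.
Proof.
  unfold ell_delta. rewrite <- sqrt_1 at 2. apply sqrt_le_1_alt.
  pose proof (pow2_ge_0 (sin phi)). pose proof (pow2_ge_0 m). nra.
Qed.

Lemma ell_integrand_continuous phi : continuous (fun psi => / ell_delta m psi) phi.
Proof.
  apply (ex_derive_continuous (K := R_AbsRing) (V := R_NormedModule)).
  unfold ell_delta. pose proof (ell_radicand_pos phi). pose proof (ell_delta_pos phi).
  auto_derive.
  replace (1 + - (m * (m * 1) * (sin phi * (sin phi * 1)))) with (1 - m ^ 2 * sin phi ^ 2) by ring.
  unfold ell_delta in *. repeat split; lra.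
Qed.

Lemma is_derive_ellF phi : is_derive (ellF m) phi (/ ell_delta m phi).
Proof.
  apply (is_derive_RInt (fun psi => / ell_delta m psi) (ellF m) 0);
    [| apply ell_integrand_continuous].
  apply filter_forall. intros b. apply (RInt_correct (V := R_CompleteNormedModule)).
  apply (ex_RInt_continuous (V := R_CompleteNormedModule)).
  intros x _. apply ell_integrand_continuous.
Qed.

Lemma Derive_ellF phi : Derive (ellF m) phi = / ell_delta m phi.
Proof. apply is_derive_unique, is_derive_ellF. Qed.

Lemma ex_derive_ellF phi : ex_derive (ellF m) phi.
Proof. eexists. apply is_derive_ellF. Qed.

Lemma ellF_0 : ellF m 0 = 0.
Proof. apply (RInt_point (V := R_CompleteNormedModule)). Qed.

Lemma ellF_increment_ge a b : a <= b -> b - a <= ellF m b - ellF m a.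
Proof.
  intros Hab.
  destruct (MVT_cor4 (ellF m) (fun phi => / ell_delta m phi) a (b - a)
              (fun c _ => is_derive_ellF c) b) as [c [Hc _]].
  { rewrite Rabs_pos_eq; lra. }
  assert (1 <= / ell_delta m c).
  { rewrite <- Rinv_1. pose proof (ell_delta_pos c). pose proof (ell_delta_le_1 c).
    apply Rinv_le_contravar; lra. }
  nra.
Qed.

Lemma ellF_opp phi : ellF m (- phi) = - ellF m phi.
Proof.
  assert (Hder : forall x, is_derive (fun x => ellF m (- x) + ellF m x) x 0).
  { intros x. auto_derive.
    - repeat split; apply ex_derive_ellF.
    - rewrite !Derive_ellF. unfold ell_delta. rewrite sin_neg.
      replace ((- sin x) ^ 2) with (sin x ^ 2) by ring. ring. }
  pose proof (is_derive_0_const _ phi 0 Hder) as H; simpl in H.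
  rewrite Ropp_0, ellF_0 in H. lra.
Qed.

Lemma ellF_add_PI phi : ellF m (phi + PI) = ellF m phi + 2 * ellK m.
Proof.
  assert (Hder : forall x, is_derive (fun x => ellF m (x + PI) - ellF m x) x 0).
  { intros x. auto_derive.
    - repeat split; apply ex_derive_ellF.
    - rewrite !Derive_ellF. unfold ell_delta. rewrite neg_sin.
      replace ((- sin x) ^ 2) with (sin x ^ 2) by ring. ring. }
  pose proof (is_derive_0_const _ phi (- (PI / 2)) Hder) as H; simpl in H.
  replace (- (PI / 2) + PI) with (PI / 2) in H by field.
  rewrite ellF_opp in H. unfold ellK. lra.
Qed.

Lemma ellF_continuity : continuity (ellF m).
Proof.
  intros x. apply continuity_pt_filterlim.
  apply (ex_derive_continuous (K := R_AbsRing) (V := R_NormedModule)), ex_derive_ellF.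
Qed.

Lemma ellF_lt a b : a < b -> ellF m a < ellF m b.
Proof. intros Hab. pose proof (ellF_increment_ge a b). lra. Qed.

Lemma ellF_inj a b : ellF m a = ellF m b -> a = b.
Proof.
  intros H. destruct (Rtotal_order a b) as [h|[h|h]]; auto;
    apply ellF_lt in h; lra.
Qed.

Lemma ellF_surj u : exists phi, ellF m phi = u.
Proof.
  assert (Hu : ellF m (- Rabs u) <= u <= ellF m (Rabs u)).
  { pose proof (ellF_increment_ge 0 (Rabs u) (Rabs_pos u)). rewrite ellF_opp, ellF_0 in *.
    pose proof (Rle_abs u). pose proof (Rle_abs (- u)). rewrite Rabs_Ropp in *. lra. }
  destruct (IVT_gen (ellF m) (- Rabs u) (Rabs u) u ellF_continuity) as [phi [_ Hphi]].
  - rewrite Rmin_left, Rmax_right; lra.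
  - now exists phi.
Qed.

Lemma ellF_am u : ellF m (am m u) = u.
Proof. apply (epsilon_spec (inhabits 0) (fun phi => ellF m phi = u)), ellF_surj. Qed.

Lemma am_ellF phi : am m (ellF m phi) = phi.
Proof. apply ellF_inj, ellF_am. Qed.

Lemma am_lt u v : u < v -> am m u < am m v.
Proof.
  intros H. destruct (Rlt_le_dec (am m u) (am m v)) as [|Hle]; auto.
  pose proof (ellF_increment_ge _ _ Hle). rewrite !ellF_am in *. lra.
Qed.

Lemma am_lipschitz u v : Rabs (am m u - am m v) <= Rabs (u - v).
Proof.
  destruct (Rle_dec (am m u) (am m v)) as [Hle|Hgt].
  - pose proof (ellF_increment_ge _ _ Hle). rewrite !ellF_am in *. rewrite !Rabs_left1; lra.
  - pose proof (ellF_increment_ge (am m v) (am m u)). rewrite !ellF_am in *.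
    rewrite !Rabs_pos_eq; lra.
Qed.

Lemma am_0 : am m 0 = 0.
Proof. pose proof (am_ellF 0) as H. rewrite ellF_0 in H. exact H. Qed.

Lemma am_ellK : am m (ellK m) = PI / 2.
Proof. apply am_ellF. Qed.

Lemma am_opp u : am m (- u) = - am m u.
Proof. apply ellF_inj. rewrite ellF_opp, !ellF_am. reflexivity. Qed.

Lemma am_add_2K u : am m (u + 2 * ellK m) = am m u + PI.
Proof. apply ellF_inj. rewrite ellF_add_PI, !ellF_am. reflexivity. Qed.

Lemma am_add_2nK u n : am m (u + 2 * INR n * ellK m) = am m u + INR n * PI.
Proof.
  induction n as [|n IH].
  - simpl. rewrite Rmult_0_r, Rmult_0_l, Rmult_0_l, !Rplus_0_r. reflexivity.
  - rewrite S_INR.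
    replace (u + 2 * (INR n + 1) * ellK m) with ((u + 2 * INR n * ellK m) + 2 * ellK m) by ring.
    rewrite am_add_2K, IH. ring.
Qed.

Lemma ellK_pos : 0 < ellK m.
Proof. rewrite <- ellF_0. apply ellF_lt. pose proof PI_RGT_0. lra. Qed.

Lemma is_derive_am u : is_derive (am m) u (ell_delta m (am m u)).
Proof.
  apply is_derive_Reals.
  assert (Hcont : continuity_pt (am m) u).
  { intros eps Heps. exists eps. split; auto. intros x [_ Hx].
    pose proof (am_lipschitz x u). simpl in *. unfold R_dist in *. lra. }
  assert (Hint : am m (u - 1) <= am m u <= am m (u + 1)).
  { split; apply Rlt_le, am_lt; lra. }
  assert (Hder : forall a, am m (u - 1) <= a <= am m (u + 1) -> derivable_pt (ellF m) a).
  { intros a _. apply ex_derive_Reals_0, ex_derive_ellF. }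
  pose proof (derivable_pt_lim_recip_interv (ellF m) (am m) (u - 1) (u + 1) u Hder Hcont
                ltac:(lra) ltac:(lra) Hint) as H.
  rewrite (derive_pt_eq_0 _ _ _ _ (proj1 (is_derive_Reals _ _ _) (is_derive_ellF (am m u)))) in H.
  pose proof (ell_delta_pos (am m u)).
  replace (ell_delta m (am m u)) with (1 / / ell_delta m (am m u)) by (field; lra).
  apply H.
  - intros x _. apply ellF_am.
  - apply Rinv_neq_0_compat. lra.
Qed.

End Amplitude.

Section Jacobi.
Variable m : R.
Hypothesis m_range : 0 <= m < 1.

Lemma sn_cn_sq u : sn m u ^ 2 + cn m u ^ 2 = 1.
Proof. unfold sn, cn. rewrite <- (sin2_cos2 (am m u)). unfold Rsqr. ring. Qed.

Lemma dn_pos u : 0 < dn m u.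
Proof. apply (ell_delta_pos m m_range). Qed.

Lemma dn_sq u : dn m u ^ 2 = 1 - m ^ 2 * sn m u ^ 2.
Proof. apply pow2_sqrt, Rlt_le, (ell_radicand_pos m m_range). Qed.

Lemma jacobi_denom_pos u v : 0 < 1 - m ^ 2 * sn m u ^ 2 * sn m v ^ 2.
Proof.
  pose proof (sn_cn_sq u). pose proof (sn_cn_sq v).
  pose proof (pow2_ge_0 (cn m u)). pose proof (pow2_ge_0 (cn m v)).
  pose proof (pow2_ge_0 (sn m u)). pose proof (pow2_ge_0 (sn m v)).
  assert (sn m u ^ 2 * sn m v ^ 2 <= 1) by nra. nra.
Qed.

Lemma sn_cn_pos u : 0 < u < ellK m -> 0 < sn m u /\ 0 < cn m u.
Proof.
  intros Hu. assert (Ham : 0 < am m u < PI / 2).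
  { rewrite <- (am_ellK m m_range), <- (am_0 m m_range) at 1.
    split; apply am_lt; tauto. }
  unfold sn, cn. split; [apply sin_gt_0 | apply cos_gt_0]; lra.
Qed.

Lemma sn_0 : sn m 0 = 0.
Proof. unfold sn. rewrite (am_0 m m_range). apply sin_0. Qed.

Lemma cn_0 : cn m 0 = 1.
Proof. unfold cn. rewrite (am_0 m m_range). apply cos_0. Qed.

Lemma dn_0 : dn m 0 = 1.
Proof. unfold dn. rewrite sn_0. replace (1 - m ^ 2 * 0 ^ 2) with 1 by ring. apply sqrt_1. Qed.

Lemma sn_opp u : sn m (- u) = - sn m u.
Proof. unfold sn. rewrite (am_opp m m_range). apply sin_neg. Qed.

Lemma cn_opp u : cn m (- u) = cn m u.
Proof. unfold cn. rewrite (am_opp m m_range). apply cos_neg. Qed.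

Lemma dn_opp u : dn m (- u) = dn m u.
Proof. unfold dn. rewrite sn_opp. f_equal. ring. Qed.

Lemma is_derive_sn u : is_derive (sn m) u (cn m u * dn m u).
Proof.
  replace (cn m u * dn m u) with (scal (dn m u) (cos (am m u))) by (unfold cn; apply Rmult_comm).
  apply (is_derive_comp sin (am m)); [| apply (is_derive_am m m_range)].
  auto_derive; auto. ring.
Qed.

Lemma is_derive_cn u : is_derive (cn m) u (- sn m u * dn m u).
Proof.
  replace (- sn m u * dn m u) with (scal (dn m u) (- sin (am m u)))
    by (unfold sn, scal; simpl; unfold mult; simpl; ring).
  apply (is_derive_comp cos (am m)); [| apply (is_derive_am m m_range)].
  auto_derive; auto. ring.
Qed.

Lemma is_derive_dn u : is_derive (dn m) u (- m ^ 2 * sn m u * cn m u).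
Proof.
  pose proof (dn_pos u) as Hd. pose proof (dn_sq u) as Hd2.
  replace (- m ^ 2 * sn m u * cn m u)
    with (scal (cn m u * dn m u) (- m ^ 2 * sn m u / dn m u))
    by (unfold scal; simpl; unfold mult; simpl; field; lra).
  apply (is_derive_comp (fun s => sqrt (1 - m ^ 2 * s ^ 2)) (sn m)); [| apply is_derive_sn].
  pose proof (ell_radicand_pos m m_range (am m u)).
  auto_derive.
  - unfold sn in *. lra.
  - change (sqrt (1 + - (m * (m * 1) * (sn m u * (sn m u * 1))))) with (dn m u).
    field. lra.
Qed.

Lemma Derive_sn u : Derive (sn m) u = cn m u * dn m u.
Proof. apply is_derive_unique, is_derive_sn. Qed.

Lemma Derive_cn u : Derive (cn m) u = - sn m u * dn m u.
Proof. apply is_derive_unique, is_derive_cn. Qed.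

Lemma Derive_dn u : Derive (dn m) u = - m ^ 2 * sn m u * cn m u.
Proof. apply is_derive_unique, is_derive_dn. Qed.

(* The shape in which [auto_derive] returns the derivative of a quotient. *)
Lemma quotient_rule_zero A B C D :
  D <> 0 -> A * D + B * C = 0 -> A * / D + B * (- - C * / (D * D)) = 0.
Proof. intros HD H. field_simplify_eq; auto. Qed.

Local Ltac addition_derivative_zero x w :=
  pose proof (jacobi_denom_pos x (w + - x)) as Hden; simpl in Hden;
  auto_derive;
  [ repeat match goal with
    | |- _ /\ _ => split
    | |- True => exact I
    | |- ex_derive (fun x => sn m x) ?y => exists (cn m y * dn m y); apply is_derive_sn
    | |- ex_derive (fun x => cn m x) ?y => exists (- sn m y * dn m y); apply is_derive_cn
    | |- ex_derive (fun x => dn m x) ?y => exists (- m ^ 2 * sn m y * cn m y); apply is_derive_dn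
    | |- _ <> 0 => lra
    end
  | rewrite !Derive_sn, !Derive_cn, !Derive_dn;
    apply quotient_rule_zero; [lra | clear Hden];
    pose proof (sn_cn_sq x); pose proof (sn_cn_sq (w + - x));
    pose proof (dn_sq x); pose proof (dn_sq (w + - x));
    generalize dependent (sn m x); generalize dependent (cn m x); generalize dependent (dn m x);
    generalize dependent (sn m (w + - x)); generalize dependent (cn m (w + - x));
    generalize dependent (dn m (w + - x));
    intros; simpl in *; nsatz ].

(* For fixed [w = u + v], the right-hand side evaluated at [(x, w - x)] has zero derivative
   in [x], and at [x = 0] it is [sn m w]; likewise for [cn_add]. *)
Lemma sn_add u v : sn m (u + v) =
  (sn m u * cn m v * dn m v + sn m v * cn m u * dn m u) / (1 - m ^ 2 * sn m u ^ 2 * sn m v ^ 2).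
Proof.
  set (w := u + v).
  assert (Hder : forall x, is_derive (fun x =>
    (sn m x * cn m (w - x) * dn m (w - x) + sn m (w - x) * cn m x * dn m x) /
    (1 - m ^ 2 * sn m x ^ 2 * sn m (w - x) ^ 2)) x 0).
  { intros x. addition_derivative_zero x w. }
  pose proof (is_derive_0_const _ u 0 Hder) as H; cbv beta in H.
  replace (w - u) with v in H by (unfold w; ring). replace (w - 0) with w in H by ring.
  rewrite sn_0, cn_0, dn_0 in H. rewrite H. field.
Qed.

Lemma cn_add u v : cn m (u + v) =
  (cn m u * cn m v - sn m u * sn m v * dn m u * dn m v) / (1 - m ^ 2 * sn m u ^ 2 * sn m v ^ 2).
Proof.
  set (w := u + v).
  assert (Hder : forall x, is_derive (fun x =>
    (cn m x * cn m (w - x) - sn m x * sn m (w - x) * dn m x * dn m (w - x)) /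
    (1 - m ^ 2 * sn m x ^ 2 * sn m (w - x) ^ 2)) x 0).
  { intros x. addition_derivative_zero x w. }
  pose proof (is_derive_0_const _ u 0 Hder) as H; cbv beta in H.
  replace (w - u) with v in H by (unfold w; ring). replace (w - 0) with w in H by ring.
  rewrite sn_0, cn_0, dn_0 in H. rewrite H. field.
Qed.

Lemma jacobi_chord u v :
  let den := 1 - m ^ 2 * sn m u ^ 2 * sn m v ^ 2 in
  sn m (u + v) - sn m (u - v) = 2 * sn m v * cn m u * dn m u / den /\
  cn m (u + v) - cn m (u - v) = - 2 * sn m u * sn m v * dn m u * dn m v / den /\
  cn m (u - v) * sn m (u + v) - sn m (u - v) * cn m (u + v) =
    2 * sn m v * cn m v * dn m u / den.
Proof.
  intros den. pose proof (jacobi_denom_pos u v) as Hden. fold den in Hden.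
  replace (u - v) with (u + - v) by ring. rewrite !sn_add, !cn_add, !sn_opp, !cn_opp, !dn_opp.
  replace (1 - m ^ 2 * sn m u ^ 2 * (- sn m v) ^ 2) with den by (unfold den; ring).
  fold den. split; [| split]; try (field; lra).
  pose proof (sn_cn_sq u). pose proof (dn_sq v).
  field_simplify_eq; [| lra]. unfold den. nsatz.
Qed.

End Jacobi.

(** * Chords and tangents of ellipses *)

Lemma det2_opp A B : det2 A B = - det2 B A.
Proof. unfold det2. ring. Qed.

Lemma det2_pos_neq A B : 0 < det2 A B -> A <> B.
Proof. intros H <-. unfold det2 in H. lra. Qed.

Lemma det2_pos_nonzero P Q : 0 < det2 P Q -> P <> (0, 0) /\ Q <> (0, 0).
Proof. intros H. split; intros ->; unfold det2 in H; cbn [fst snd] in H; lra. Qed.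

Definition vec (A B : point) : point := (fst B - fst A, snd B - snd A).

Definition line_pt (A B : point) (t : R) : point :=
  (fst A + t * (fst B - fst A), snd A + t * (snd B - snd A)).

Lemma line_pt_0 A B : line_pt A B 0 = A.
Proof. destruct A. unfold line_pt; simpl. f_equal; ring. Qed.

Lemma line_pt_1 A B : line_pt A B 1 = B.
Proof. destruct A, B. unfold line_pt; simpl. f_equal; ring. Qed.

Lemma vec_neq0 A B : A <> B -> fst (vec A B) <> 0 \/ snd (vec A B) <> 0.
Proof.
  destruct A as [a1 a2], B as [b1 b2]; simpl. intros H.
  destruct (Req_dec (b1 - a1) 0); destruct (Req_dec (b2 - a2) 0); auto.
  exfalso; apply H. f_equal; lra.
Qed.

Lemma det2_eq0_collinear v w : det2 v w = 0 -> fst w <> 0 \/ snd w <> 0 ->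
  exists l, v = (l * fst w, l * snd w).
Proof.
  destruct v as [vx vy], w as [wx wy]; unfold det2; simpl. intros H [Hw|Hw].
  - exists (vx / wx). f_equal; field_simplify_eq; auto; lra.
  - exists (vy / wy). f_equal; field_simplify_eq; auto; lra.
Qed.

Lemma sum_sq_pos x y : x <> 0 \/ y <> 0 -> 0 < x ^ 2 + y ^ 2.
Proof.
  intros [H|H]; pose proof (pow2_gt_0 _ H);
    pose proof (pow2_ge_0 x); pose proof (pow2_ge_0 y); lra.
Qed.

Lemma scaled_sum_sq_pos a b w : a <> 0 -> b <> 0 -> fst w <> 0 \/ snd w <> 0 ->
  0 < (fst w / a) ^ 2 + (snd w / b) ^ 2.
Proof.
  intros Ha Hb Hw. apply sum_sq_pos.
  destruct Hw as [Hw|Hw]; [left|right]; intros H; apply Hw.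
  - replace (fst w) with (fst w / a * a) by (field; auto). rewrite H. ring.
  - replace (snd w) with (snd w / b * b) by (field; auto). rewrite H. ring.
Qed.

Lemma ellipse_line_two_points ae be A B t : ae <> 0 -> be <> 0 -> A <> B ->
  on_ellipse ae be A -> on_ellipse ae be B -> on_ellipse ae be (line_pt A B t) ->
  t = 0 \/ t = 1.
Proof.
  intros Hae Hbe Hne HA HB HX.
  pose proof (scaled_sum_sq_pos _ _ _ Hae Hbe (vec_neq0 _ _ Hne)) as Hal.
  destruct A as [ax ay], B as [bx by0]. unfold on_ellipse, line_pt, vec in *. cbn [fst snd] in *.
  (* the ellipse equation restricted to the line is a quadratic in [t] vanishing at 0 and 1 *)
  assert (Hq : (((bx - ax) / ae) ^ 2 + ((by0 - ay) / be) ^ 2) * (t * (t - 1)) = 0).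
  { transitivity ((ax + t * (bx - ax)) ^ 2 / ae ^ 2 + (ay + t * (by0 - ay)) ^ 2 / be ^ 2 - 1
                  - (1 - t) * (ax ^ 2 / ae ^ 2 + ay ^ 2 / be ^ 2 - 1)
                  - t * (bx ^ 2 / ae ^ 2 + by0 ^ 2 / be ^ 2 - 1)).
    - field; auto.
    - rewrite HA, HB, HX. ring. }
  apply Rmult_integral in Hq as [Hq|Hq]; [lra|].
  apply Rmult_integral in Hq as [Hq|Hq]; [left|right]; lra.
Qed.

Lemma chord_collinear ae be A B Q : ae <> 0 -> be <> 0 -> A <> B -> Q <> A ->
  on_ellipse ae be A -> on_ellipse ae be B -> on_ellipse ae be Q ->
  det2 (vec A Q) (vec A B) = 0 -> Q = B.
Proof.
  intros Hae Hbe HAB HQA HA HB HQ Hdet.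
  destruct (det2_eq0_collinear _ _ Hdet (vec_neq0 _ _ HAB)) as [l Hl].
  assert (HQl : Q = line_pt A B l).
  { destruct A, B, Q. unfold vec, line_pt in *. cbn [fst snd] in *.
    injection Hl as H1 H2. f_equal; lra. }
  rewrite HQl in HQ |- *.
  destruct (ellipse_line_two_points ae be A B l Hae Hbe HAB HA HB HQ) as [->| ->].
  - rewrite line_pt_0 in HQl. contradiction.
  - apply line_pt_1.
Qed.

Lemma ellipse_not_on_line ae be A B C : ae <> 0 -> be <> 0 ->
  on_ellipse ae be A -> on_ellipse ae be B -> on_ellipse ae be C ->
  A <> B -> C <> A -> C <> B -> ~ on_line A B C.
Proof.
  intros Hae Hbe HA HB HC HAB HCA HCB [t Ht]. fold (line_pt A B t) in Ht.
  rewrite Ht in HC, HCA, HCB.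
  destruct (ellipse_line_two_points ae be A B t Hae Hbe HAB HA HB HC) as [->| ->].
  - apply HCA, line_pt_0.
  - apply HCB, line_pt_1.
Qed.

Lemma ellipse_det_neq0 ae be A B C : ae <> 0 -> be <> 0 ->
  on_ellipse ae be A -> on_ellipse ae be B -> on_ellipse ae be C ->
  A <> B -> C <> A -> C <> B -> det2 (vec A B) (vec A C) <> 0.
Proof.
  intros Hae Hbe HA HB HC HAB HCA HCB Hdet. apply HCB.
  apply (chord_collinear ae be A B C); auto.
  unfold det2 in *. lra.
Qed.

Definition qform (p q r : R) (w : point) : R :=
  p * fst w ^ 2 + 2 * q * fst w * snd w + r * snd w ^ 2.

Definition qpolar (p q r : R) (u v : point) : R :=
  p * fst u * fst v + q * (fst u * snd v + snd u * fst v) + r * snd u * snd v.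

(* Cramer: [det2 u v * z = det2 z v * u + det2 u z * v]. *)
Lemma qform_cramer p q r u v z :
  det2 u v ^ 2 * qform p q r z =
  det2 z v ^ 2 * qform p q r u + 2 * det2 z v * det2 u z * qpolar p q r u v
  + det2 u z ^ 2 * qform p q r v.
Proof. unfold qform, qpolar, det2. ring. Qed.

Lemma qform_isotropic_two p q r u v z : p <> 0 \/ q <> 0 \/ r <> 0 ->
  qform p q r u = 0 -> qform p q r v = 0 -> qform p q r z = 0 -> det2 u v <> 0 ->
  det2 z v = 0 \/ det2 u z = 0.
Proof.
  intros Hpqr Hu Hv Hz Huv.
  destruct (Req_dec (det2 z v) 0) as [|Hzv]; auto.
  destruct (Req_dec (det2 u z) 0) as [|Huz]; auto.
  exfalso.
  assert (Hpolar : qpolar p q r u v = 0).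
  { pose proof (qform_cramer p q r u v z) as E. rewrite Hu, Hv, Hz in E.
    assert (2 * det2 z v * det2 u z <> 0)
      by (repeat apply Rmult_integral_contrapositive_currified; lra).
    apply (Rmult_eq_reg_l (2 * det2 z v * det2 u z)); lra. }
  assert (Hall : forall z', qform p q r z' = 0).
  { intros z'. pose proof (qform_cramer p q r u v z') as E. rewrite Hu, Hv, Hpolar in E.
    assert (det2 u v ^ 2 <> 0) by (apply pow_nonzero; auto).
    apply (Rmult_eq_reg_l (det2 u v ^ 2)); lra. }
  pose proof (Hall (1, 0)) as H10. pose proof (Hall (0, 1)) as H01. pose proof (Hall (1, 1)) as H11.
  unfold qform in H10, H01, H11. cbn [fst snd] in *.
  destruct Hpqr as [H|[H|H]]; apply H; lra.
Qed.

Definition tangency_form (ac bc : R) (A : point) : point -> R :=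
  qform (bc ^ 2 - snd A ^ 2) (fst A * snd A) (ac ^ 2 - fst A ^ 2).

Lemma tangency_form_det ac bc A w :
  tangency_form ac bc A w = bc ^ 2 * fst w ^ 2 + ac ^ 2 * snd w ^ 2 - det2 A w ^ 2.
Proof. unfold tangency_form, qform, det2. ring. Qed.

Lemma tangency_form_sym ac bc A B :
  tangency_form ac bc A (vec A B) = tangency_form ac bc B (vec B A).
Proof. rewrite !tangency_form_det. unfold vec, det2. cbn [fst snd]. ring. Qed.

Lemma ellipse_line_quadratic ac bc A w t : ac <> 0 -> bc <> 0 ->
  let al := (fst w / ac) ^ 2 + (snd w / bc) ^ 2 in
  let k := fst A * fst w / ac ^ 2 + snd A * snd w / bc ^ 2 in
  al * ((fst A + t * fst w) ^ 2 / ac ^ 2 + (snd A + t * snd w) ^ 2 / bc ^ 2 - 1) =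
  (al * t + k) ^ 2 - tangency_form ac bc A w / (ac ^ 2 * bc ^ 2).
Proof. intros Hac Hbc al k. unfold al, k. rewrite tangency_form_det. unfold det2. field. auto. Qed.

Lemma unique_sq_root al k c : 0 < al -> (exists! t, (al * t + k) ^ 2 = c) <-> c = 0.
Proof.
  intros Hal. split.
  - intros [t0 [Ht0 Huniq]].
    destruct (Rtotal_order c 0) as [Hc|[Hc|Hc]]; auto; exfalso.
    + pose proof (pow2_ge_0 (al * t0 + k)). lra.
    + assert (Hroot : forall e, e ^ 2 = c -> (al * ((e - k) / al) + k) ^ 2 = c)
        by (intros e He; replace (al * ((e - k) / al) + k) with e by (field; lra); exact He).
      assert (Hs : sqrt c ^ 2 = c) by (apply pow2_sqrt; lra).
      assert (Hs' : (- sqrt c) ^ 2 = c) by (rewrite <- Hs at 2; ring).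
      pose proof (Huniq _ (Hroot _ Hs)) as E1. pose proof (Huniq _ (Hroot _ Hs')) as E2.
      assert (sqrt c = - sqrt c).
      { apply (Rmult_eq_reg_r (/ al)); [| apply Rinv_neq_0_compat; lra].
        apply (Rplus_eq_reg_r (- k / al)). unfold Rdiv in E1, E2. lra. }
      pose proof (sqrt_lt_R0 c Hc). lra.
  - intros ->. exists (- k / al). split.
    + replace (al * (- k / al) + k) with 0 by (field; lra). ring.
    + intros t Ht. assert (al * t + k = 0) by nra.
      field_simplify_eq; lra.
Qed.

Lemma line_pt_inj A B t s : A <> B -> line_pt A B t = line_pt A B s -> t = s.
Proof.
  intros Hne H. destruct (vec_neq0 _ _ Hne) as [Hw|Hw];
    destruct A, B; unfold line_pt, vec in *; cbn [fst snd] in *; injection H as H1 H2;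
    (eapply Rmult_eq_reg_r; [| exact Hw]); lra.
Qed.

Lemma tangent_line_iff ac bc A B : ac <> 0 -> bc <> 0 ->
  tangent_line ac bc A B <-> A <> B /\ tangency_form ac bc A (vec A B) = 0.
Proof.
  intros Hac Hbc.
  assert (Hc : forall c, c / (ac ^ 2 * bc ^ 2) = 0 <-> c = 0).
  { intros c. assert (Hacbc : ac ^ 2 * bc ^ 2 <> 0)
      by (apply Rmult_integral_contrapositive_currified; apply pow_nonzero; auto).
    split; intros H; [| rewrite H; unfold Rdiv; ring].
    apply (Rmult_eq_reg_r (/ (ac ^ 2 * bc ^ 2))); [| apply Rinv_neq_0_compat; auto].
    unfold Rdiv in H. lra. }
  split; intros [Hne Htan]; split; auto.
  all: pose proof (scaled_sum_sq_pos _ _ _ Hac Hbc (vec_neq0 _ _ Hne)) as Hal.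
  all: set (al := (fst (vec A B) / ac) ^ 2 + (snd (vec A B) / bc) ^ 2) in Hal.
  all: set (k := fst A * fst (vec A B) / ac ^ 2 + snd A * snd (vec A B) / bc ^ 2).
  all: set (c := tangency_form ac bc A (vec A B) / (ac ^ 2 * bc ^ 2)).
  all: assert (Hroot : forall t, on_ellipse ac bc (line_pt A B t) <-> (al * t + k) ^ 2 = c);
    [ intros t; pose proof (ellipse_line_quadratic ac bc A (vec A B) t Hac Hbc) as E;
      fold al k c in E; unfold on_ellipse;
      change (fst (line_pt A B t)) with (fst A + t * fst (vec A B));
      change (snd (line_pt A B t)) with (snd A + t * snd (vec A B));
      split; intros H; [rewrite H in E | apply (Rmult_eq_reg_l al)]; lra |].
  - apply Hc, (unique_sq_root al k c Hal).
    destruct Htan as [X [[HX [t0 Ht0]] Huniq]]. fold (line_pt A B t0) in Ht0. subst X.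
    exists t0. split; [apply Hroot; auto |].
    intros s Hs. apply (line_pt_inj A B); auto.
    apply Huniq. split; [apply Hroot; auto | exists s; reflexivity].
  - apply Hc in Htan. fold c in Htan.
    destruct (proj2 (unique_sq_root al k c Hal) Htan) as [t0 [Ht0 Huniq]].
    exists (line_pt A B t0). split; [split; [apply Hroot; auto | exists t0; reflexivity] |].
    intros Y [HY [s Hs]]. fold (line_pt A B s) in Hs. subst Y.
    f_equal. apply Huniq, Hroot, HY.
Qed.

Lemma tangency_form_nondegenerate ac bc A : 0 < ac -> 0 < bc ->
  bc ^ 2 - snd A ^ 2 <> 0 \/ fst A * snd A <> 0 \/ ac ^ 2 - fst A ^ 2 <> 0.
Proof.
  intros Hac Hbc.
  destruct (Req_dec (fst A * snd A) 0) as [H|H]; auto.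
  apply Rmult_integral in H as [H|H]; rewrite H; [right; right | left]; nra.
Qed.

Lemma tangent_chords_two ae be ac bc A P1 P2 Q : ae <> 0 -> be <> 0 -> 0 < ac -> 0 < bc ->
  on_ellipse ae be A -> on_ellipse ae be P1 -> on_ellipse ae be P2 -> on_ellipse ae be Q ->
  tangency_form ac bc A (vec A P1) = 0 -> tangency_form ac bc A (vec A P2) = 0 ->
  tangency_form ac bc A (vec A Q) = 0 -> Q <> A -> det2 (vec A P1) (vec A P2) <> 0 ->
  Q = P1 \/ Q = P2.
Proof.
  intros Hae Hbe Hac Hbc HA H1 H2 HQ T1 T2 TQ HQA Hdet.
  assert (Hneq : forall P, det2 (vec A P) (vec A P2) <> 0 \/ det2 (vec A P1) (vec A P) <> 0 ->
                 A <> P).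
  { intros P Hd <-. unfold vec, det2 in Hd. cbn [fst snd] in Hd. destruct Hd as [Hd|Hd]; lra. }
  destruct (qform_isotropic_two _ _ _ _ _ _ (tangency_form_nondegenerate ac bc A Hac Hbc)
              T1 T2 TQ Hdet) as [Hd|Hd].
  - right. apply (chord_collinear ae be A P2 Q); auto.
  - left. apply (chord_collinear ae be A P1 Q); auto.
    unfold det2 in *. lra.
Qed.

(** * Polar angle along an ellipse *)

Definition ellipse_pt (ae be phi : R) : point := (- ae * sin phi, be * cos phi).

(* [ellipse_pt ae be phi] is [(be c^2 + ae s^2, (ae - be) s c)] rotated by [phi + PI/2]
   (with [s = sin phi], [c = cos phi]), and that vector has positive abscissa. *)
Definition polar_lift (ae be phi : R) : R :=
  phi + PI / 2 +
  atan (((ae - be) * sin phi * cos phi) / (be * cos phi ^ 2 + ae * sin phi ^ 2)).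

Lemma polar_lift_spec ae be phi : 0 < ae -> 0 < be ->
  let P := ellipse_pt ae be phi in
  cos (polar_lift ae be phi) = fst P / vnorm P /\
  sin (polar_lift ae be phi) = snd P / vnorm P.
Proof.
  intros Hae Hbe P. unfold polar_lift, P, ellipse_pt, vnorm; cbn [fst snd].
  set (s := sin phi). set (c := cos phi).
  assert (Hsc : s ^ 2 + c ^ 2 = 1) by (unfold s, c; rewrite <- (sin2_cos2 phi); unfold Rsqr; ring).
  set (x := be * c ^ 2 + ae * s ^ 2). set (y := (ae - be) * s * c).
  assert (Hx : 0 < x).
  { unfold x. destruct (Req_dec s 0) as [Hs|Hs].
    - assert (c ^ 2 = 1) by (rewrite Hs in Hsc; lra). nra.
    - pose proof (pow2_gt_0 s Hs). pose proof (pow2_ge_0 c). nra. }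
  assert (Hrot : s * x + c * y = ae * s /\ c * x - s * y = be * c /\
                 (- ae * s) ^ 2 + (be * c) ^ 2 = x ^ 2 + y ^ 2)
    by (unfold x, y; clear - Hsc; clearbody s c; simpl in *; repeat split; nsatz).
  destruct Hrot as [Hxs [Hyc Hr2]].
  set (r := sqrt ((- ae * s) ^ 2 + (be * c) ^ 2)).
  assert (Hr : 0 < r).
  { apply sqrt_lt_R0. rewrite Hr2. pose proof (pow2_ge_0 y). pose proof (pow2_gt_0 x). lra. }
  assert (Hsq : sqrt (1 + (y / x)²) = r / x).
  { rewrite <- (sqrt_pow2 (r / x)) by (apply Rlt_le, Rdiv_lt_0_compat; auto).
    f_equal. unfold r, Rdiv. rewrite Rpow_mult_distr, pow2_sqrt, Hr2.
    - unfold Rsqr. field. lra.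
    - rewrite Hr2. pose proof (pow2_ge_0 y). pose proof (pow2_ge_0 x). lra. }
  assert (Cg : cos (atan (y / x)) = x / r) by (rewrite cos_atan, Hsq; field; lra).
  assert (Sg : sin (atan (y / x)) = y / r) by (rewrite sin_atan, Hsq; field; lra).
  replace (phi + PI / 2 + atan (y / x)) with ((phi + atan (y / x)) + PI / 2) by ring.
  repeat rewrite ?cos_plus, ?sin_plus. rewrite cos_PI2, sin_PI2, Cg, Sg. fold s c r.
  split.
  - replace (- ae * s) with (- (s * x + c * y)) by (rewrite Hxs; ring). field. lra.
  - rewrite <- Hyc. field. lra.
Qed.

Lemma vnorm_pos P : P <> (0, 0) -> 0 < vnorm P.
Proof.
  intros HP. apply sqrt_lt_R0, sum_sq_pos.
  destruct P as [x y]. cbn [fst snd].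
  destruct (Req_dec x 0); [destruct (Req_dec y 0)|]; auto. subst. contradiction.
Qed.

Lemma acos_cos_of_sin_pos x : - PI < x < 2 * PI -> 0 < sin x -> acos (cos x) = x.
Proof.
  intros Hx Hs. apply acos_cos. split.
  - destruct (Rle_dec 0 x) as [|Hneg]; auto. exfalso.
    pose proof (sin_ge_0 (- x) ltac:(lra) ltac:(lra)) as Hs'. rewrite sin_neg in Hs'. lra.
  - destruct (Rle_dec x PI) as [|Hbig]; auto. exfalso.
    pose proof (sin_le_0 x ltac:(lra) ltac:(lra)). lra.
Qed.

Lemma angle_polar_lift ae be p1 p2 : 0 < ae -> 0 < be -> 0 < p2 - p1 < PI ->
  0 < det2 (ellipse_pt ae be p1) (ellipse_pt ae be p2) ->
  angle (ellipse_pt ae be p1) (ellipse_pt ae be p2) = polar_lift ae be p2 - polar_lift ae be p1.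
Proof.
  intros Hae Hbe Hp Hdet.
  destruct (det2_pos_nonzero _ _ Hdet) as [N1 N2].
  apply vnorm_pos in N1, N2.
  destruct (polar_lift_spec ae be p1 Hae Hbe) as [C1 S1].
  destruct (polar_lift_spec ae be p2 Hae Hbe) as [C2 S2].
  set (P1 := ellipse_pt ae be p1) in *. set (P2 := ellipse_pt ae be p2) in *.
  unfold angle. rewrite <- (acos_cos_of_sin_pos (polar_lift ae be p2 - polar_lift ae be p1)).
  - f_equal. rewrite cos_minus, C1, C2, S1, S2. field. lra.
  - unfold polar_lift.
    pose proof (atan_bound (((ae - be) * sin p1 * cos p1) / (be * cos p1 ^ 2 + ae * sin p1 ^ 2))).
    pose proof (atan_bound (((ae - be) * sin p2 * cos p2) / (be * cos p2 ^ 2 + ae * sin p2 ^ 2))).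
    lra.
  - rewrite sin_minus, C1, C2, S1, S2.
    replace (snd P2 / vnorm P2 * (fst P1 / vnorm P1) - fst P2 / vnorm P2 * (snd P1 / vnorm P1))
      with (det2 P1 P2 / (vnorm P1 * vnorm P2)) by (unfold det2; field; lra).
    apply Rdiv_lt_0_compat; auto. apply Rmult_lt_0_compat; auto.
Qed.

Lemma polar_lift_add_2nPI ae be phi n :
  polar_lift ae be (phi + 2 * INR n * PI) = polar_lift ae be phi + 2 * INR n * PI.
Proof. unfold polar_lift. rewrite sin_period, cos_period. ring. Qed.

Lemma ellipse_pt_surj ae be P : 0 < ae -> 0 < be -> on_ellipse ae be P ->
  exists phi, P = ellipse_pt ae be phi.
Proof.
  intros Hae Hbe H. destruct P as [x y]. unfold on_ellipse in H; cbn [fst snd] in H.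
  set (p := - x / ae). set (q := y / be).
  assert (Hpq : p ^ 2 + q ^ 2 = 1) by (unfold p, q; rewrite <- H; field; lra).
  assert (Hq : -1 <= q <= 1) by (pose proof (pow2_ge_0 p); split; nra).
  assert (Hs : sqrt (1 - q²) = Rabs p).
  { rewrite <- sqrt_Rsqr_abs. f_equal. unfold Rsqr. simpl in Hpq. lra. }
  destruct (Rle_dec 0 p).
  - exists (acos q). unfold ellipse_pt. rewrite sin_acos, cos_acos, Hs, Rabs_pos_eq; auto.
    unfold p, q. f_equal; field; lra.
  - exists (- acos q). unfold ellipse_pt.
    rewrite sin_neg, cos_neg, sin_acos, cos_acos, Hs, Rabs_left; try lra.
    unfold p, q. f_equal; field; lra.
Qed.

Lemma param_ellipse_pt m ae be u : param m ae be u = ellipse_pt ae be (am m u).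
Proof. reflexivity. Qed.

Lemma param_surj m ae be P : 0 <= m < 1 -> 0 < ae -> 0 < be -> on_ellipse ae be P ->
  exists u, P = param m ae be u.
Proof.
  intros Hm Hae Hbe HP. destruct (ellipse_pt_surj ae be P Hae Hbe HP) as [phi ->].
  exists (ellF m phi). rewrite param_ellipse_pt, am_ellF; auto.
Qed.

Lemma param_on_ellipse m ae be u : ae <> 0 -> be <> 0 -> on_ellipse ae be (param m ae be u).
Proof.
  intros Hae Hbe. unfold on_ellipse, param; cbn [fst snd].
  rewrite <- (sn_cn_sq m u). field. auto.
Qed.

(** * Billiard orbits *)

Section Orbit.
Variables m ac bc ae be du : R.
Hypothesis m_range : 0 <= m < 1.
Hypothesis modulus : m ^ 2 * ac ^ 2 = ac ^ 2 - bc ^ 2.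
Hypothesis ac_pos : 0 < ac.
Hypothesis bc_pos : 0 < bc.
Hypothesis ae_pos : 0 < ae.
Hypothesis be_pos : 0 < be.
Hypothesis confocal : ae ^ 2 - ac ^ 2 = be ^ 2 - bc ^ 2.
Hypothesis du_range : 0 < du < ellK m.
Hypothesis step : bc = be * cn m du.

Lemma step_dn_sq : ac ^ 2 * dn m du ^ 2 = ae ^ 2 * cn m du ^ 2.
Proof.
  apply (Rmult_eq_reg_l (be ^ 2)); [| apply pow_nonzero; lra].
  rewrite (dn_sq m m_range).
  replace (be ^ 2 * (ac ^ 2 * (1 - m ^ 2 * sn m du ^ 2)))
    with (be ^ 2 * ac ^ 2 - be ^ 2 * sn m du ^ 2 * (m ^ 2 * ac ^ 2)) by ring.
  rewrite modulus. replace (ae ^ 2) with (ac ^ 2 + be ^ 2 - bc ^ 2) by lra.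
  replace (sn m du ^ 2) with (1 - cn m du ^ 2) by (pose proof (sn_cn_sq m du); lra).
  rewrite step. ring.
Qed.

Lemma param_chord_tangent u :
  let A := param m ae be (u - du) in
  let B := param m ae be (u + du) in
  tangency_form ac bc A (vec A B) = 0 /\ 0 < det2 A B.
Proof.
  intros A B.
  destruct (jacobi_chord m m_range u du) as [Hx [Hy Hxy]].
  set (den := 1 - m ^ 2 * sn m u ^ 2 * sn m du ^ 2) in *.
  pose proof (jacobi_denom_pos m m_range u du) as Hden. fold den in Hden.
  pose proof (sn_cn_pos m m_range du du_range) as [HS HC].
  pose proof (dn_pos m m_range u) as Hd. pose proof (dn_pos m m_range du) as HD.
  assert (Hdet : det2 A B = ae * be *
            (cn m (u - du) * sn m (u + du) - sn m (u - du) * cn m (u + du)))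
    by (unfold A, B, param, det2; cbn [fst snd]; ring).
  rewrite Hxy in Hdet.
  split.
  - (* [step_dn_sq] and [step] eliminate [ac] and [bc]; what is left is
       [sn u ^ 2 + cn u ^ 2 = 1] *)
    rewrite tangency_form_det.
    replace (det2 A (vec A B)) with (det2 A B) by (unfold det2, vec; cbn [fst snd]; ring).
    replace (fst (vec A B)) with (- ae * (sn m (u + du) - sn m (u - du)))
      by (unfold A, B, vec, param; cbn [fst snd]; ring).
    replace (snd (vec A B)) with (be * (cn m (u + du) - cn m (u - du)))
      by (unfold A, B, vec, param; cbn [fst snd]; ring).
    replace (ac ^ 2) with (ae ^ 2 * cn m du ^ 2 / dn m du ^ 2)
      by (rewrite <- step_dn_sq; field; lra).
    rewrite Hdet, Hx, Hy, step.
    pose proof (sn_cn_sq m u). field_simplify_eq; [| lra]. nsatz.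
  - rewrite Hdet. repeat apply Rmult_lt_0_compat; try apply Rinv_0_lt_compat; lra.
Qed.

Definition orbit (u0 : R) (k : Z) : point := param m ae be (u0 + 2 * IZR k * du).

Lemma orbit_step u0 k :
  tangency_form ac bc (orbit u0 k) (vec (orbit u0 k) (orbit u0 (k + 1))) = 0 /\
  0 < det2 (orbit u0 k) (orbit u0 (k + 1)).
Proof.
  unfold orbit. rewrite plus_IZR.
  pose proof (param_chord_tangent (u0 + (2 * IZR k + 1) * du)) as H. cbv zeta in H.
  replace (u0 + (2 * IZR k + 1) * du - du) with (u0 + 2 * IZR k * du) in H by ring.
  replace (u0 + (2 * IZR k + 1) * du + du) with (u0 + 2 * (IZR k + 1) * du) in H by ring.
  exact H.
Qed.

Lemma orbit_on_ellipse u0 k : on_ellipse ae be (orbit u0 k).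
Proof. unfold orbit. apply param_on_ellipse; apply Rgt_not_eq; assumption. Qed.

Lemma orbit_neq_pred u0 k : orbit u0 (k - 1) <> orbit u0 (k + 1).
Proof.
  intros E. pose proof (proj2 (orbit_step u0 (k - 1))) as D1.
  pose proof (proj2 (orbit_step u0 k)) as D2.
  replace (k - 1 + 1)%Z with k in D1 by ring. rewrite E, det2_opp in D1. lra.
Qed.

Lemma orbit_billiard u0 : billiard ae be ac bc (orbit u0).
Proof.
  split; [| split; [| split]].
  - apply orbit_on_ellipse.
  - intros k. apply tangent_line_iff; try lra.
    destruct (orbit_step u0 k) as [T D]. split; auto. apply det2_pos_neq; auto.
  - intros k. pose proof (proj2 (orbit_step u0 (k - 1))) as D1.
    pose proof (proj2 (orbit_step u0 k)) as D2. replace (k - 1 + 1)%Z with k in D1 by ring.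
    apply (ellipse_not_on_line ae be); try apply orbit_on_ellipse; try lra.
    + apply det2_pos_neq; auto.
    + apply not_eq_sym, orbit_neq_pred.
    + apply not_eq_sym, det2_pos_neq; auto.
  - intros k. apply orbit_step.
Qed.

Lemma orbit_tangent_neighbours u0 k Q : on_ellipse ae be Q -> Q <> orbit u0 k ->
  tangency_form ac bc (orbit u0 k) (vec (orbit u0 k) Q) = 0 ->
  Q = orbit u0 (k + 1) \/ Q = orbit u0 (k - 1).
Proof.
  intros HQ HQk TQ.
  destruct (orbit_step u0 k) as [T1 D1]. destruct (orbit_step u0 (k - 1)) as [T2 D2].
  replace (k - 1 + 1)%Z with k in T2, D2 by ring.
  rewrite tangency_form_sym in T2.
  apply (tangent_chords_two ae be ac bc (orbit u0 k)); try apply orbit_on_ellipse; auto; try lra.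
  apply (ellipse_det_neq0 ae be); try apply orbit_on_ellipse; try lra.
  - apply det2_pos_neq; auto.
  - apply det2_pos_neq; auto.
  - apply orbit_neq_pred.
Qed.

Lemma orbit_0 u0 : orbit u0 0 = param m ae be u0.
Proof. unfold orbit. f_equal. ring. Qed.

Section Uniqueness.
Variables (P : Z -> point) (u0 : R).
Hypothesis P_billiard : billiard ae be ac bc P.

Lemma billiard_next_orbit k : P k = orbit u0 k -> P (k + 1)%Z = orbit u0 (k + 1).
Proof.
  intros Hk. destruct P_billiard as [Hon [Htan [_ Hdet]]].
  destruct (proj1 (tangent_line_iff ac bc _ _ ltac:(lra) ltac:(lra)) (Htan k)) as [Hne T].
  rewrite Hk in Hne, T.
  destruct (orbit_tangent_neighbours u0 k _ (Hon _) (not_eq_sym Hne) T) as [E|E]; auto.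
  exfalso. pose proof (Hdet k) as Dk. pose proof (proj2 (orbit_step u0 (k - 1))) as D.
  replace (k - 1 + 1)%Z with k in D by ring. rewrite Hk, E, det2_opp in Dk. lra.
Qed.

Lemma billiard_prev_orbit k : P k = orbit u0 k -> P (k - 1)%Z = orbit u0 (k - 1).
Proof.
  intros Hk. destruct P_billiard as [Hon [Htan [_ Hdet]]].
  pose proof (Htan (k - 1)%Z) as Tk. replace (k - 1 + 1)%Z with k in Tk by ring.
  destruct (proj1 (tangent_line_iff ac bc _ _ ltac:(lra) ltac:(lra)) Tk) as [Hne T].
  rewrite tangency_form_sym, Hk in T. rewrite Hk in Hne.
  destruct (orbit_tangent_neighbours u0 k _ (Hon _) Hne T) as [E|E]; auto.
  exfalso. pose proof (Hdet (k - 1)%Z) as Dk. replace (k - 1 + 1)%Z with k in Dk by ring.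
  pose proof (proj2 (orbit_step u0 k)) as D. rewrite Hk, E, det2_opp in Dk. lra.
Qed.

Lemma billiard_eq_orbit : P 0%Z = orbit u0 0 -> forall k, P k = orbit u0 k.
Proof.
  intros H0 k. induction k as [|k IH|k IH] using Z.peano_ind; auto.
  - apply billiard_next_orbit in IH. now rewrite <- Z.add_1_r.
  - apply billiard_prev_orbit in IH. now rewrite <- Z.sub_1_r.
Qed.

End Uniqueness.

Lemma billiard_is_orbit P : billiard ae be ac bc P -> exists u0, P = orbit u0.
Proof.
  intros HP. destruct (param_surj m ae be (P 0%Z) m_range ae_pos be_pos (proj1 HP 0%Z))
    as [u0 Hu0].
  exists u0. extensionality k. apply billiard_eq_orbit; auto. now rewrite orbit_0.
Qed.

Lemma am_step_range x : 0 < am m (x + 2 * du) - am m x < PI.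
Proof.
  pose proof (am_lt m m_range x (x + 2 * du) ltac:(lra)).
  pose proof (am_lt m m_range (x + 2 * du) (x + 2 * ellK m) ltac:(lra)).
  rewrite am_add_2K in *; auto. lra.
Qed.

Lemma swept_orbit u0 n : swept (orbit u0) n =
  polar_lift ae be (am m (u0 + 2 * INR n * du)) - polar_lift ae be (am m u0).
Proof.
  induction n as [|n IH].
  - simpl. rewrite Rmult_0_r, Rmult_0_l, Rplus_0_r. ring.
  - simpl swept. rewrite IH. pose proof (proj2 (orbit_step u0 (Z.of_nat n))) as D.
    unfold orbit in *. rewrite plus_IZR, <- INR_IZR_INZ in *. rewrite S_INR.
    replace (u0 + 2 * (INR n + 1) * du) with ((u0 + 2 * INR n * du) + 2 * du) in * by ring.
    rewrite !param_ellipse_pt in *.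
    rewrite angle_polar_lift; auto using am_step_range. ring.
Qed.

Section Periodic.
Variables N tau : nat.
Hypothesis rotation : INR N * du = 2 * INR tau * ellK m.

Lemma am_add_period x : am m (x + 2 * INR N * du) = am m x + 2 * INR tau * PI.
Proof.
  replace (x + 2 * INR N * du) with (x + 2 * INR (2 * tau) * ellK m)
    by (rewrite mult_INR; simpl (INR 2); lra).
  rewrite (am_add_2nK m m_range), mult_INR. simpl (INR 2). ring.
Qed.

Lemma orbit_periodic u0 : periodic N (orbit u0).
Proof.
  intros k. unfold orbit. rewrite plus_IZR, <- INR_IZR_INZ, !param_ellipse_pt.
  replace (u0 + 2 * (IZR k + INR N) * du) with ((u0 + 2 * IZR k * du) + 2 * INR N * du) by ring.
  rewrite am_add_period. unfold ellipse_pt. rewrite sin_period, cos_period. reflexivity.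
Qed.

Lemma orbit_turning_number u0 : turning_number N tau (orbit u0).
Proof.
  unfold turning_number. rewrite swept_orbit, am_add_period, polar_lift_add_2nPI. ring.
Qed.

End Periodic.

End Orbit.

Lemma eccentricity_spec ac bc : 0 < bc -> bc < ac ->
  let m := sqrt (ac ^ 2 - bc ^ 2) / ac in 0 <= m < 1 /\ m ^ 2 * ac ^ 2 = ac ^ 2 - bc ^ 2.
Proof.
  intros Hb Hab m.
  assert (Hd2 : sqrt (ac ^ 2 - bc ^ 2) ^ 2 = ac ^ 2 - bc ^ 2) by (apply pow2_sqrt; nra).
  assert (Hm2 : m ^ 2 * ac ^ 2 = ac ^ 2 - bc ^ 2)
    by (unfold m, Rdiv; rewrite Rpow_mult_distr, Hd2; field; lra).
  assert (Hm0 : 0 <= m) by (apply Rdiv_le_0_compat; [apply sqrt_pos | lra]).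
  assert (Hm1 : m ^ 2 < 1) by (apply (Rmult_lt_reg_r (ac ^ 2)); nra).
  repeat split; auto. nra.
Qed.

Lemma confocal_of_step m ac bc du : 0 <= m < 1 -> m ^ 2 * ac ^ 2 = ac ^ 2 - bc ^ 2 ->
  0 < ac -> 0 < bc -> 0 < du < ellK m ->
  let ae := ac * dn m du / cn m du in
  let be := bc / cn m du in
  0 < ae /\ 0 < be /\ bc ^ 2 < be ^ 2 /\ ae ^ 2 - ac ^ 2 = be ^ 2 - bc ^ 2 /\ bc = be * cn m du.
Proof.
  intros Hm modulus Hac Hbc Hdu ae be.
  destruct (sn_cn_pos m Hm du Hdu) as [HS HC].
  pose proof (dn_pos m Hm du) as HD. pose proof (dn_sq m Hm du) as HD2.
  pose proof (sn_cn_sq m du) as Hsc.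
  assert (Hbe2 : be ^ 2 - bc ^ 2 = bc ^ 2 * sn m du ^ 2 / cn m du ^ 2)
    by (unfold be; field_simplify_eq; [nra | lra]).
  assert (Hae2 : ae ^ 2 - ac ^ 2 = bc ^ 2 * sn m du ^ 2 / cn m du ^ 2)
    by (unfold ae; field_simplify_eq; [nra | lra]).
  assert (Hpos : 0 < bc ^ 2 * sn m du ^ 2 / cn m du ^ 2)
    by (apply Rdiv_lt_0_compat; [apply Rmult_lt_0_compat |]; apply pow_lt; lra).
  repeat split; try lra.
  - unfold ae. apply Rdiv_lt_0_compat; nra.
  - unfold be. apply Rdiv_lt_0_compat; lra.
  - unfold be. field. lra.
Qed.

Lemma rotation_step_range m N tau : 0 <= m < 1 -> (1 <= tau)%nat -> (2 * tau < N)%nat ->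
  let du := 2 * INR tau * ellK m / INR N in
  0 < du < ellK m /\ INR N * du = 2 * INR tau * ellK m.
Proof.
  intros Hm Htau H2tau du.
  pose proof (ellK_pos m Hm).
  assert (1 <= INR tau) by (apply (le_INR 1); lia).
  assert (2 * INR tau < INR N)
    by (replace 2 with (INR 2) by (simpl; ring); rewrite <- mult_INR; apply lt_INR; lia).
  assert (Hrot : INR N * du = 2 * INR tau * ellK m) by (unfold du; field; lra).
  split; [split; apply (Rmult_lt_reg_l (INR N)) |]; nra.
Qed.

Theorem theorem2 (ac bc : R) (Hb : 0 < bc) (Hab : bc < ac) :
  let d := sqrt (ac ^ 2 - bc ^ 2) in
  let m := d / ac in
  (* Part 1 *)
  (forall ae be ke : R, 0 < ke -> 0 < ae -> 0 < be ->
     ae ^ 2 = ac ^ 2 + ke -> be ^ 2 = bc ^ 2 + ke ->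
     forall du : R, 0 < du -> du < ellK m -> bc = be * cn m du ->
     forall u0 : R,
       billiard ae be ac bc (fun k : Z => param m ae be (u0 + 2 * IZR k * du)) /\
       (forall P : Z -> point, billiard ae be ac bc P ->
          P 0%Z = param m ae be u0 ->
          forall k : Z, P k = param m ae be (u0 + 2 * IZR k * du))) /\
  (* Part 2 *)
  (forall N tau : nat, (3 <= N)%nat -> (1 <= tau)%nat -> Nat.gcd N tau = 1%nat ->
     (2 * tau < N)%nat ->
     let du := 2 * INR tau * ellK m / INR N in
     let ae := ac * dn m du / cn m du in
     let be := bc / cn m du in
     (exists ke : R, 0 < ke /\ ae ^ 2 = ac ^ 2 + ke /\ be ^ 2 = bc ^ 2 + ke) /\
     (forall P : Z -> point, billiard ae be ac bc P ->
        periodic N P /\ turning_number N tau P)).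
Proof.
  intros d m.
  assert (ac_pos : 0 < ac) by lra.
  destruct (eccentricity_spec ac bc Hb Hab) as [m_range modulus].
  split.
  - intros ae be ke _ Hae Hbe Hae2 Hbe2 du Hdu HduK Hstep u0.
    assert (Hconf : ae ^ 2 - ac ^ 2 = be ^ 2 - bc ^ 2) by lra.
    split.
    + exact (orbit_billiard m ac bc ae be du m_range modulus ac_pos Hb Hae Hbe Hconf
               (conj Hdu HduK) Hstep u0).
    + intros P HP HP0. apply (billiard_eq_orbit m ac bc ae be du); auto.
      now rewrite orbit_0.
  - (* [3 <= N] follows from the other hypotheses, and [Nat.gcd N tau = 1] only makes [N]
       the minimal period. *)
    intros N tau _ Htau _ H2tau du ae be.
    destruct (rotation_step_range m N tau m_range Htau H2tau) as [Hdu Hrot].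
    destruct (confocal_of_step m ac bc du m_range modulus ac_pos Hb Hdu)
      as [Hae [Hbe [Hke [Hconf Hstep]]]]; fold ae be in Hae, Hbe, Hke, Hconf, Hstep.
    split; [exists (be ^ 2 - bc ^ 2); repeat split; lra |].
    intros P HP.
    destruct (billiard_is_orbit m ac bc ae be du m_range modulus ac_pos Hb Hae Hbe Hconf Hdu
                Hstep P HP) as [u0 ->].
    split.
    + exact (orbit_periodic m ae be du m_range N tau Hrot u0).
    + exact (orbit_turning_number m ac bc ae be du m_range modulus Hae Hbe Hconf Hdu Hstep
               N tau Hrot u0).
Qed.
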